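(* Let $B_{n,k}=[x^n]\,\frac{1+3x^2}{1+x^2}\left(\frac{x}{1+x^2}\right)^k$ be the coefficient array of the Boubaker polynomials (the case $r=3$ of the restricted Chebyshev–Boubaker polynomials). Then for all $n\ge 0$, $B_{2n,n}=0^n$, i.e. $B_{0,0}=1$ and $B_{2n,n}=0$ for $n\ge 1$.
   Context: $[x^n]h(x)$ denotes the coefficient of $x^n$ in $h(x)$; $0^n$ is $1$ for $n=0$ and $0$ for $n>0$. The Boubaker polynomials are $B_n(x)=\sum_k B_{n,k}x^k$. *)

From HB Require Import structures.
From mathcomp Require Import all_boot all_order all_algebra.
Set Implicit Arguments. Unset Strict Implicit. Unset Printing Implicit Defensive.
Import Order.TTheory GRing.Theory Num.Theory.
Local Open Scope ring_scope.

Definition fps := nat -> rat.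

Definition fps_of_poly (p : {poly rat}) : fps := fun n => p`_n.

Definition fps_mul (f g : fps) : fps :=
  fun n => \sum_(i < n.+1) f i * g (n - i)%N.

Definition fps_one : fps := fun n => (n == 0%N)%:R.

Definition fps_pow (f : fps) (k : nat) : fps := iter k (fps_mul f) fps_one.

(* first n+1 coefficients of the inverse series g of f (f 0 != 0):
   g 0 = (f 0)^-1,  g m = - (f 0)^-1 * \sum_(1 <= i <= m) f i * g (m - i) *)
Fixpoint fps_inv_seq (f : fps) (n : nat) : seq rat :=
  match n with
  | 0 => [:: (f 0%N)^-1]
  | m.+1 => let s := fps_inv_seq f m in
      rcons s (- (f 0%N)^-1 *
               \sum_(i < m.+1) f i.+1 * nth 0 s (m - i)%N)
  end.

Definition fps_inv (f : fps) : fps := fun n => nth 0 (fps_inv_seq f n) n.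

Definition boubakerB (n k : nat) : rat :=
  let P := fps_of_poly (1 + 3%:R *: 'X^2) in
  let Qinv := fps_inv (fps_of_poly (1 + 'X^2)) in
  fps_mul (fps_mul P Qinv) (fps_pow (fps_mul (fps_of_poly 'X) Qinv) k) n.

(** The generating function of the diagonal: B_{2n,n} = [x^n] (1+3x^2) q^{n+1}
    with q = 1/(1+x^2).  Writing θ = x d/dx, the identity (1+x^2) q = 1 gives
    θq = -2x^2 q^2, hence n (1+3x^2) q^{n+1} = n q^n - θ(q^n).  Since θ
    multiplies the coefficient of x^n by n, the right-hand side has no x^n
    term, so B_{2n,n} = 0 for n > 0.  Series are represented by their
    polynomial truncations modulo x^N, i.e. up to divisibility by 'X^N. *)
From HB Require Import structures.
From mathcomp Require Import all_boot all_order all_algebra.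
From mathcomp Require Import ring.
Set Implicit Arguments. Unset Strict Implicit. Unset Printing Implicit Defensive.
Import GRing.Theory Num.Theory.
Local Open Scope ring_scope.

Section DivisibilityByXn.

Variable R : fieldType.
Implicit Types (p : {poly R}) (N : nat).

Lemma dvdXnP N p : reflect (forall i, (i < N)%N -> p`_i = 0) ('X^N %| p).
Proof.
apply: (iffP (dvdpP _ _)) => [[k ->] i ltiN | p_low].
  by rewrite coefMXn ltiN.
exists (drop_poly N p); rewrite -[LHS](poly_take_drop N).
suff -> : take_poly N p = 0 by rewrite add0r.
by apply/polyP => i; rewrite coef_take_poly coef0; case: ifP => // /p_low.
Qed.

Lemma dvdXn_mulrn N p k : 'X^N %| p -> 'X^N %| p *+ k.
Proof. by rewrite -mulr_natr; apply: dvdp_mulr. Qed.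

End DivisibilityByXn.

Section EulerOperator.

Variable R : comNzRingType.
Implicit Types p q : {poly R}.

Definition theta p := 'X * p^`().

Lemma coef_theta p i : (theta p)`_i = p`_i *+ i.
Proof. by rewrite coefXM; case: i => [|i] //=; rewrite coef_deriv. Qed.

Lemma thetaB p q : theta (p - q) = theta p - theta q.
Proof. by rewrite /theta derivB mulrBr. Qed.

Lemma theta1 : theta 1 = 0.
Proof. by rewrite /theta -polyC1 derivC mulr0. Qed.

Lemma thetaM p q : theta (p * q) = theta p * q + p * theta q.
Proof. by rewrite /theta derivM; ring. Qed.

Lemma thetaX p k : theta (p ^+ k) = theta p * p ^+ k.-1 *+ k.
Proof. by rewrite /theta deriv_exp mulrnAr mulrA. Qed.

Lemma theta_1pX2 : theta (1 + 'X^2) = 'X^2 *+ 2.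
Proof.
by rewrite /theta derivD -polyC1 derivC derivXn add0r mulrnAr -expr2.
Qed.

End EulerOperator.

Lemma dvdXn_theta (R : fieldType) N (p : {poly R}) :
  'X^N %| p -> 'X^N %| theta p.
Proof.
move=> /dvdXnP p_low; apply/dvdXnP => i ltiN.
by rewrite coef_theta p_low ?mul0rn.
Qed.

Section InverseOf1pX2.

Variables (R : numFieldType) (N : nat) (q : {poly R}).
Hypothesis q_inv : 'X^N %| (1 + 'X^2) * q - 1.

Lemma theta_inv_1pX2 : 'X^N %| theta q + 'X^2 *+ 2 * q ^+ 2.
Proof.
set e := (1 + 'X^2) * q - 1.
have -> : theta q + 'X^2 *+ 2 * q ^+ 2 = q * theta e - e * theta q.
  by rewrite /e thetaB thetaM theta_1pX2 theta1 subr0; ring.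
by apply: dvdp_sub; [apply/dvdp_mull/dvdXn_theta | apply: dvdp_mulr].
Qed.

Lemma euler_relation_inv_1pX2 n :
  'X^N %| ((1 + 3%:R *: 'X^2) * q ^+ n.+1) *+ n - (q ^+ n *+ n - theta (q ^+ n)).
Proof.
case: n => [|m]; first by rewrite !mulr0n expr0 theta1 !subrr dvdp0.
set E := theta q + 'X^2 *+ 2 * q ^+ 2.
have -> : ((1 + 3%:R *: 'X^2) * q ^+ m.+2) *+ m.+1
          - (q ^+ m.+1 *+ m.+1 - theta (q ^+ m.+1))
        = (((1 + 'X^2) * q - 1) * q ^+ m.+1 + E * q ^+ m) *+ m.+1.
  by rewrite thetaX /E -mul_polyC polyC_natr /= !exprS; ring.
by apply/dvdXn_mulrn/dvdp_add; apply: dvdp_mulr => //; apply: theta_inv_1pX2.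
Qed.

Lemma coef_diagonal_inv_1pX2 n : (n < N)%N ->
  ((1 + 3%:R *: 'X^2) * q ^+ n.+1)`_n = 0 ^+ n.
Proof.
move=> ltnN; have /dvdXnP q_low := q_inv.
case: n ltnN => [|m] ltnN.
  have := q_low 0%N ltnN; rewrite expr1 coefB coef1 !coef0M => /eqP.
  rewrite subr_eq0 => /eqP.
  by rewrite !coefD coef1 coefZ !coefXn mulr0.
have /dvdXnP/(_ m.+1 ltnN)/eqP := euler_relation_inv_1pX2 m.+1.
rewrite coefB coefB !coefMn coef_theta subrr subr0 mulrn_eq0 /=.
by rewrite expr0n => /eqP.
Qed.

End InverseOf1pX2.

Section FpsTruncation.

Implicit Types (f g : fps) (p r : {poly rat}) (N : nat).

Definition fps_approx N f p := forall i, (i < N)%N -> f i = p`_i.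

Lemma fps_approx_poly N p : fps_approx N (fps_of_poly p) p.
Proof. by []. Qed.

Lemma fps_approx_trunc N f : fps_approx N f (\poly_(i < N) f i).
Proof. by move=> i ltiN; rewrite coef_poly ltiN. Qed.

Lemma fps_approx_mul N f g p r :
  fps_approx N f p -> fps_approx N g r -> fps_approx N (fps_mul f g) (p * r).
Proof.
move=> fp gr i ltiN; rewrite coefM; apply: eq_bigr => -[j /= ltji] _.
have lejN : (j < N)%N by apply: leq_ltn_trans ltiN.
by rewrite fp // gr // (leq_ltn_trans (leq_subr _ _) ltiN).
Qed.

Lemma fps_approx_pow N f p k :
  fps_approx N f p -> fps_approx N (fps_pow f k) (p ^+ k).
Proof.
move=> fp; elim: k => [|k IHk]; first by move=> i _; rewrite expr0 coef1.
by rewrite exprS; apply: fps_approx_mul.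
Qed.

End FpsTruncation.

Section FpsInverse.

Implicit Type f : fps.

Lemma size_fps_inv_seq f n : size (fps_inv_seq f n) = n.+1.
Proof. by elim: n => [|n IHn] //=; rewrite size_rcons IHn. Qed.

Lemma nth_fps_inv_seq f n m :
  (m <= n)%N -> nth 0 (fps_inv_seq f n) m = fps_inv f m.
Proof.
elim: n m => [|n IHn] m lemn; first by case: m lemn.
rewrite /= nth_rcons size_fps_inv_seq.
case: ltnP => [ltmn1|lenm]; first exact: IHn.
have -> : m = n.+1 by apply/eqP; rewrite eqn_leq lemn.
by rewrite eqxx /fps_inv /= nth_rcons size_fps_inv_seq ltnn eqxx.
Qed.

Lemma fps_invS f m :
  fps_inv f m.+1 = - (f 0%N)^-1 * \sum_(i < m.+1) f i.+1 * fps_inv f (m - i)%N.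
Proof.
rewrite {1}/fps_inv /= nth_rcons size_fps_inv_seq ltnn eqxx.
by congr (_ * _); apply: eq_bigr => i _; rewrite nth_fps_inv_seq // leq_subr.
Qed.

Lemma fps_mulV f n : f 0%N != 0 -> fps_mul f (fps_inv f) n = fps_one n.
Proof.
move=> f0; rewrite /fps_mul /fps_one; case: n => [|m].
  by rewrite big_ord1 /fps_inv /= mulfV.
rewrite big_ord_recl /= subn0 fps_invS mulrA mulrN mulfV // mulN1r.
by under eq_bigr => i _ do rewrite /bump /= add1n subSS; rewrite addNr.
Qed.

Lemma dvdXn_fps_inv N f p : f 0%N != 0 -> fps_approx N f p ->
  'X^N %| p * \poly_(i < N) fps_inv f i - 1.
Proof.
move=> f0 fp; apply/dvdXnP => i ltiN.
rewrite coefB coef1 -(fps_approx_mul fp (fps_approx_trunc _)) //.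
by rewrite fps_mulV // subrr.
Qed.

End FpsInverse.

Theorem mainTheorem4 : forall n : nat, boubakerB n.*2 n = 0 ^+ n.
Proof.
move=> n; pose N := n.*2.+1.
pose F := fps_of_poly (1 + 'X^2); pose q := \poly_(i < N) fps_inv F i.
have F0 : F 0%N != 0 by rewrite /F /fps_of_poly coefD coef1 coefXn.
have q_inv : 'X^N %| (1 + 'X^2) * q - 1 by apply: dvdXn_fps_inv.
have approx_q : fps_approx N (fps_inv F) q by apply: fps_approx_trunc.
rewrite /boubakerB -/F (fps_approx_mul (fps_approx_mul (fps_approx_poly _) approx_q)
  (fps_approx_pow _ (fps_approx_mul (fps_approx_poly _) approx_q))) //.
have -> : (1 + 3%:R *: 'X^2) * q * ('X * q) ^+ n =
          'X^n * ((1 + 3%:R *: 'X^2) * q ^+ n.+1).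
  by rewrite exprMn [q ^+ n.+1]exprS mulrCA -mulrA.
rewrite coefXnM -addnn ltnNge (leq_addr n) addnK /=.
by apply: (coef_diagonal_inv_1pX2 q_inv); rewrite /N ltnS -addnn leq_addr.
Qed.
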